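(* Let $\mathbf{k}$ be a commutative ring, $n\ge 0$, and $\mathcal{A}=\mathbf{k}[S_n]$. If $\alpha,\beta\in\operatorname{Comp}_n$ are anagrams (that is, $\widetilde{\alpha}=\widetilde{\beta}$), then $\mathcal{R}_\alpha=\mathcal{R}_\beta$.
   Context: $S_n$ is the symmetric group on $[n]=\{1,\dots,n\}$, with product $(uw)(i)=u(w(i))$. For $w\in S_n$, $\operatorname{Des}(w)=\{i\in[n-1]: w(i)>w(i+1)\}$. For $I\subseteq[n-1]$, $\mathbf{B}_I=\sum_{w\in S_n,\ \operatorname{Des}(w)\subseteq I} w\in\mathcal{A}$. A composition $\alpha=(\alpha_1,\dots,\alpha_p)$ of $n$ is a finite sequence of positive integers with sum $n$; $\operatorname{Comp}_n$ is the set of these. $\operatorname{Set}(\alpha)=\{\alpha_1,\alpha_1+\alpha_2,\dots,\alpha_1+\cdots+\alpha_{p-1}\}\subseteq[n-1]$, and $\mathbf{B}_\alpha:=\mathbf{B}_{\operatorname{Set}(\alpha)}$. The underlying partition $\widetilde{\alpha}$ is obtained by sorting the parts of $\alpha$ in weakly decreasing order; $\alpha,\beta$ are anagrams if $\widetilde\alpha=\widetilde\beta$. For $\beta\in\operatorname{Comp}_n$, $\mathcal{R}_\beta:=\mathbf{B}_\beta\mathcal{A}$ (a right ideal of $\mathcal{A}$). *)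

From HB Require Import structures.
From mathcomp Require Import all_boot all_order all_algebra all_fingroup.
Set Implicit Arguments. Unset Strict Implicit. Unset Printing Implicit Defensive.
Import GRing.Theory.
Local Open Scope ring_scope.

(* The group algebra k[S_n], elements are finitely supported functions
   'S_n -> k, i.e. {ffun 'S_n -> k}; element w of S_n corresponds to the
   indicator of w.  'S_n acts on 'I_n = {0,...,n-1} (0-indexed version of [n]).

   Paper convention: (uw)(i) = u(w(i)).  MathComp convention:
   (s * t)%g x = t (s x).  Hence the paper's product uw is (w * u)%g. *)

Definition gmul (k : comPzRingType) (n : nat) (f g : {ffun 'S_n -> k})
  : {ffun 'S_n -> k} :=
  [ffun x : 'S_n => \sum_(u : 'S_n) \sum_(w : 'S_n)
      (if ((w * u)%g == x) then f u * g w else 0)].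

(* Descent set, 1-indexed as in the paper: i \in Des w iff 1 <= i <= n-1
   and w(i) > w(i+1).  With 0-indexed positions, paper position i is
   'I_n element i-1. *)
Definition isDes (n : nat) (w : 'S_n) (i : nat) : bool :=
  [exists j : 'I_n, [exists j' : 'I_n,
     [&& j.+1 == i, val j' == j.+1 & (w j' < w j)%N]]].

Definition BI (k : comPzRingType) (n : nat) (I : pred nat) : {ffun 'S_n -> k} :=
  [ffun w : 'S_n => if [forall i : 'I_n, isDes w i ==> ((i : nat) \in I)] then 1 else 0].

Definition is_comp (n : nat) (a : seq nat) : bool :=
  all (fun x => 0 < x)%N a && (sumn a == n).

Definition setc (a : seq nat) : seq nat :=
  [seq sumn (take k a) | k <- iota 1 (size a).-1].

Definition Balpha (k : comPzRingType) (n : nat) (a : seq nat) : {ffun 'S_n -> k} :=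
  BI k n (fun i => i \in setc a).

Definition underlying (a : seq nat) : seq nat := sort geq a.

Definition anagrams (a b : seq nat) : Prop := underlying a = underlying b.

Definition Rideal (k : comPzRingType) (n : nat) (b : seq nat)
  (x : {ffun 'S_n -> k}) : Prop :=
  exists y : {ffun 'S_n -> k}, x = gmul (Balpha k n b) y.

From mathcomp Require Import all_boot all_order all_algebra all_fingroup.
From mathcomp Require Import zify.
Set Implicit Arguments. Unset Strict Implicit. Unset Printing Implicit Defensive.

(* Let alpha = (p, a, b, s) and alpha' = (p, b, a, s), and let c be the permutation of
   positions moving the block of b positions of alpha' past the following block of a
   positions.  Since c is increasing on every block, w has all its descents in Set(alpha)
   iff w o c has all its descents in Set(alpha'); so B_alpha' is B_alpha multiplied by
   the unit c, and both generate the same right ideal.  Any rearrangement of the parts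
   is a product of adjacent transpositions. *)

(* With m = sumn p, sends the positions of (p, b, a, s) to the matching positions of
   (p, a, b, s). *)
Definition block_swap (m a b i : nat) : nat :=
  if i < m then i else if i < m + b then i + a else if i < m + a + b then i - b else i.

Lemma block_swapK m a b : cancel (block_swap m a b) (block_swap m b a).
Proof.
move=> i; rewrite {2}/block_swap.
case: (ltnP i m) => ?; case: (ltnP i (m + b)) => ?; case: (ltnP i (m + a + b)) => ?;
  by rewrite /block_swap; do ? case: ltnP => ?; lia.
Qed.

Lemma block_swapS m a b j :
  j.+1 \notin [:: m; m + b; m + b + a] -> block_swap m a b j.+1 = (block_swap m a b j).+1.
Proof. by rewrite !inE /block_swap; do ! case: ltnP => ?; lia. Qed.

Definition is_partial_sum (a : seq nat) (i : nat) : Prop := exists k, sumn (take k a) = i.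

Lemma sumn_take_leq (a : seq nat) k : sumn (take k a) <= sumn a.
Proof. by rewrite -{2}(cat_take_drop k a) sumn_cat leq_addr. Qed.

Lemma mem_setcP a i :
  0 < i < sumn a -> reflect (is_partial_sum a i) (i \in setc a).
Proof.
move=> /andP[i_gt0 i_lt]; apply: (iffP mapP) => [[k _ ik]|[k ik]]; first by exists k; rewrite ik.
exists k; last by rewrite ik.
have k_gt0 : 0 < k by case: k ik i_gt0 => [<-|]; rewrite ?take0.
have k_lt : k < size a.
  rewrite ltnNge; apply: contraTN i_lt => /take_oversize ak.
  by rewrite -ik ak ltnn.
by rewrite mem_iota; lia.
Qed.

Lemma is_partial_sum_cat2 p x y q i :
  is_partial_sum (p ++ x :: y :: q) i <->
  [\/ is_partial_sum p i, i = sumn p + x | is_partial_sum q (i - (sumn p + x + y))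
                                           /\ sumn p + x + y <= i].
Proof.
split=> [[k <-]|].
  rewrite take_cat; case: ltnP => [|le_p_k]; first by constructor 1; exists k.
  rewrite sumn_cat; case E: (k - size p) => [|[|k']] /=.
  - by constructor 1; exists (size p); rewrite take_size addn0.
  - by constructor 2; lia.
  - by constructor 3; split; [exists k'; lia | lia].
case=> [[k <-]|->|[[k Ek] le]].
- by exists (minn k (size p)); rewrite takel_cat ?geq_minr // take_min take_size.
- by exists (size p).+1; rewrite take_cat ltnNge leqnSn subSnn sumn_cat /=; lia.
- exists (size p + k.+2); rewrite take_cat ltnNge leq_addr /= addKn sumn_cat /=; lia.
Qed.

Lemma is_partial_sum_block_ends p x y q i :
  i \in [:: sumn p; sumn p + x; sumn p + x + y] -> is_partial_sum (p ++ x :: y :: q) i.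
Proof.
rewrite !inE is_partial_sum_cat2 => /or3P[]/eqP->.
- by constructor 1; exists (size p); rewrite take_size.
- by constructor 2.
- by constructor 3; split; [exists 0; rewrite take0 subnn | ].
Qed.

Lemma block_swap_partial_sum p a b s i :
  ~ is_partial_sum (p ++ b :: a :: s) i ->
  ~ is_partial_sum (p ++ a :: b :: s) (block_swap (sumn p) a b i).
Proof.
rewrite !is_partial_sum_cat2 /block_swap => not_ps [[k Ek]|Ea|[[k Ek] le]]; apply: not_ps.
- have le_m := sumn_take_leq p k.
  suff [->|[->|->]] : i = sumn (take k p) \/ i = sumn p \/ i = sumn p + b.
  + by constructor 1; exists k.
  + by constructor 1; exists (size p); rewrite take_size.
  + by constructor 2.
  by move: Ek; do ? case: ltnP => ?; lia.
- suff [->|->] : i = sumn p \/ i = sumn p + b + a.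
  + by constructor 1; exists (size p); rewrite take_size.
  + by constructor 3; split; [exists 0; rewrite subnn take0 | ].
  by move: Ea; do ? case: ltnP => ?; lia.
- by constructor 3; split; [exists k | ]; move: Ek le; do ? case: ltnP => ?; lia.
Qed.

Definition descents_within n (I : pred nat) (w : 'S_n) : bool :=
  [forall j : 'I_n, forall j' : 'I_n, (j' == j.+1 :> nat) ==> ~~ I j' ==> (w j < w j')].

Lemma BIE (k : comPzRingType) n I (w : 'S_n) :
  BI k n I w = if descents_within I w then 1%R else 0%R.
Proof.
rewrite ffunE; congr (if _ then _ else _); apply/forallP/forallP => [Des_I j|asc i].
  apply/forallP => j'; apply/implyP => /eqP j'E; apply/implyP => j'_notin.
  have w_neq : w j != w j'.
    by rewrite (inj_eq perm_inj); apply/eqP => jj'; move: j'E; rewrite jj'; apply: n_Sn.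
  rewrite ltn_neqAle w_neq leqNgt /=; apply: contra j'_notin => lt_w.
  apply: (implyP (Des_I j')); apply/existsP; exists j; apply/existsP; exists j'.
  by rewrite lt_w andbT; apply/andP; split; apply/eqP.
apply/implyP => /existsP[j /existsP[j' /and3P[/eqP <- /eqP j'E lt_w]]].
apply: contraLR lt_w => j'_notin.
have := forallP (asc j) j'; rewrite j'E eqxx /= => /implyP/(_ j'_notin).
by move=> lt_w; rewrite -leqNgt ltnW.
Qed.

Lemma descents_within_block_swap n p a b s (c w : 'S_n) :
  sumn (p ++ a :: b :: s) = n -> (forall i, val (c i) = block_swap (sumn p) a b i) ->
  descents_within (fun i => i \in setc (p ++ a :: b :: s)) w ->
  descents_within (fun i => i \in setc (p ++ b :: a :: s)) (c * w)%g.
Proof.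
move=> sum_n c_val /forallP asc_w; apply/forallP => j; apply/forallP => j'.
apply/implyP => /eqP j'E; apply/implyP => j'_notin; rewrite !permM.
have sum_n' : sumn (p ++ b :: a :: s) = n by rewrite -sum_n !sumn_cat /=; lia.
have j'_bound : 0 < j' < sumn (p ++ b :: a :: s) by rewrite sum_n' ltn_ord j'E.
have not_ps : ~ is_partial_sum (p ++ b :: a :: s) j'.
  by move=> ps; case/negP: j'_notin; apply/(mem_setcP j'_bound).
have cj'E : val (c j') = (c j).+1.
  rewrite !c_val j'E block_swapS //; apply: contra_notN not_ps.
  by rewrite j'E; apply: is_partial_sum_block_ends.
apply: (implyP (implyP (forallP (asc_w (c j)) (c j')) _)); first by rewrite cj'E.
have cj'_bound : 0 < c j' < sumn (p ++ a :: b :: s) by rewrite sum_n ltn_ord cj'E.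
by apply/negP => /(mem_setcP cj'_bound); rewrite c_val; apply: block_swap_partial_sum.
Qed.

Lemma block_swap_perm n m a b :
  m + a + b <= n -> {c : 'S_n | forall i, val (c i) = block_swap m a b i}.
Proof.
move=> le_n; have lt_n (i : 'I_n) : block_swap m a b i < n.
  have := ltn_ord i; rewrite /block_swap.
  by case: (ltnP i m) => ?; case: (ltnP i (m + b)) => ?; case: (ltnP i (m + a + b)) => ?; lia.
pose f i := Ordinal (lt_n i).
have f_inj : injective f.
  by move=> i j /(congr1 val) /(can_inj (block_swapK m a b)) /val_inj.
by exists (perm f_inj) => i; rewrite permE.
Qed.

Lemma Balpha_block_swap (k : comPzRingType) n p a b s :
  sumn (p ++ a :: b :: s) = n ->
  exists c : 'S_n, forall u,
    Balpha k n (p ++ b :: a :: s) (c * u)%g = Balpha k n (p ++ a :: b :: s) u.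
Proof.
move=> sum_n; have sum_n' : sumn (p ++ b :: a :: s) = n by rewrite -sum_n !sumn_cat /=; lia.
have [|c c_val] := @block_swap_perm n (sumn p) a b; first by rewrite -sum_n sumn_cat /=; lia.
have cV_val i : val (c^-1 i)%g = block_swap (sumn p) b a i.
  by rewrite -[in RHS](permKV c i) c_val block_swapK.
exists c => u; rewrite /Balpha !BIE; congr (if _ then _ else _).
apply/idP/idP => [asc|]; last exact: descents_within_block_swap.
by rewrite -(mulKg c u); apply: descents_within_block_swap asc.
Qed.

(* In the paper's product: f' = f c^-1 and [ffun w => y (w * c)] = c^-1 y. *)
Lemma gmul_translate (k : comPzRingType) n (f f' y : {ffun 'S_n -> k}) (c : 'S_n) :
  (forall u, f' u = f (c * u)%g) -> gmul f' y = gmul f [ffun w => y (w * c)%g].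
Proof.
move=> f'E; apply/ffunP => x; rewrite !ffunE.
rewrite (reindex_inj (mulgI c^-1%g)); apply: eq_bigr => u _.
rewrite (reindex_inj (mulIg c)); apply: eq_bigr => w _.
by rewrite f'E mulKVg ffunE -mulgA mulKVg.
Qed.

Lemma Rideal_translate (k : comPzRingType) n a b (c : 'S_n) :
  (forall u, Balpha k n b (c * u)%g = Balpha k n a u) ->
  forall x : {ffun 'S_n -> k}, Rideal a x <-> Rideal b x.
Proof.
move=> Bc x; split=> -[y ->].
  by exists [ffun w => y (w * c)%g]; apply: gmul_translate => u; rewrite Bc.
by exists [ffun w => y (w * c^-1)%g]; apply: gmul_translate => u; rewrite -Bc mulKVg.
Qed.

Lemma Rideal_swap (k : comPzRingType) n p a b s :
  sumn (p ++ a :: b :: s) = n ->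
  forall x : {ffun 'S_n -> k}, Rideal (p ++ a :: b :: s) x <-> Rideal (p ++ b :: a :: s) x.
Proof. by move=> /(Balpha_block_swap k) [c Bc]; apply: Rideal_translate Bc. Qed.

Section AdjacentTranspositions.

Variables (T : eqType) (P : seq T -> Prop) (R : seq T -> seq T -> Prop).
Hypothesis P_perm : forall s t, perm_eq s t -> P s -> P t.
Hypothesis R_refl : forall s, R s s.
Hypothesis R_trans : forall s t u, R s t -> R t u -> R s u.
Hypothesis R_swap :
  forall p x y q, P (p ++ x :: y :: q) -> R (p ++ x :: y :: q) (p ++ y :: x :: q).

Lemma adjacent_swaps_move p x t q :
  P (p ++ x :: t ++ q) -> R (p ++ x :: t ++ q) (p ++ t ++ x :: q).
Proof.
elim: t p => [|y t IHt] p Pp; first exact: R_refl.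
apply: R_trans (R_swap Pp) _; rewrite cat_cons -!(cat_rcons y p); apply: IHt.
by rewrite cat_rcons; apply: P_perm Pp; rewrite perm_cat2l /= (perm_catCA [:: x] [:: y]).
Qed.

Lemma adjacent_swaps_perm_eq s t : perm_eq s t -> P s -> R s t.
Proof.
suff R_perm_cat p : perm_eq s t -> P (p ++ s) -> R (p ++ s) (p ++ t) by exact: R_perm_cat [::].
elim: s t p => [|x s IHs] t p st Pps; first by move: st; rewrite perm_sym => /perm_nilP ->.
have x_t : x \in t by rewrite -(perm_mem st) mem_head.
move: st; case/splitPr: x_t => t1 t2 st.
have st' : perm_eq s (t1 ++ t2).
  by rewrite -(perm_cons x) (perm_trans st) // (perm_catCA t1 [:: x] t2).
apply: (@R_trans _ (p ++ x :: t1 ++ t2)).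
  by rewrite -!(cat_rcons x p); apply: IHs; rewrite // cat_rcons.
by apply: adjacent_swaps_move; apply: P_perm Pps; rewrite perm_cat2l perm_cons.
Qed.

End AdjacentTranspositions.

Lemma anagrams_perm_eq a b : anagrams a b -> perm_eq a b.
Proof. by rewrite /anagrams /underlying => ab; rewrite -(perm_sort geq a) ab perm_sort. Qed.

Theorem lemma2p4 (k : comPzRingType) (n : nat) (alpha beta : seq nat) :
  is_comp n alpha -> is_comp n beta -> anagrams alpha beta ->
  forall x : {ffun 'S_n -> k}, @Rideal k n alpha x <-> @Rideal k n beta x.
Proof.
move=> /andP[_ /eqP sum_alpha] _ /anagrams_perm_eq alpha_beta.
pose same_Rideal s t := forall x : {ffun 'S_n -> k}, Rideal s x <-> Rideal t x.
apply: (@adjacent_swaps_perm_eq _ (fun s => sumn s = n) same_Rideal) alpha_beta sum_alpha.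
- by move=> s t /perm_sumn ->.
- by [].
- by move=> s t u st tu x; rewrite st tu.
- exact: Rideal_swap.
Qed.
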